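(* Let $F:\mathcal{G}_{\Sigma,\Delta,\pi}\to\mathcal{G}_{\Sigma,\Delta,\pi}$ be a causal graph dynamics that is monotonic for the subgraph order and admits a monotonic local rule, and let $\widetilde{F}:\mathbf{G}_{\Sigma,\Delta,\pi}\to\mathbf{G}_{\Sigma,\Delta,\pi}$ be a functor with $\mathrm{U}\circ F=\widetilde{F}\circ\mathrm{U}$. Then the map $\overline{F}:\mathrm{Sym}_{\mathcal{V}}\to\mathrm{Sym}_{\mathcal{V}}$, $\overline{F}(R):=|\widetilde{F}(\varnothing_R)|$, is a group homomorphism.
   Context: Fix an uncountably infinite set $\mathcal{V}$, sets $\Sigma,\Delta$, finite $\pi$; $\mathrm{Sym}_{\mathcal{V}}$ is the group of bijections (renamings) of $\mathcal{V}$. Graphs: countable $V(G)\subset\mathcal{V}$, a set $E(G)$ of pairwise disjoint two-element subsets of $V(G)\times\pi$, partial labelings $\sigma(G),\delta(G)$; $\mathcal{G}_{\Sigma,\Delta,\pi}$ the set of graphs, ordered by componentwise inclusion $\subseteq$. Renamings act naturally on graphs ($V(R(G))=R(V(G))$, edges $\{u\!:\!i,v\!:\!j\}\mapsto\{R(u)\!:\!i,R(v)\!:\!j\}$, labelings precomposed with $R^{-1}$). Disks $G^r_c$: vertices at distance $\le r+1$ from $c$, edges with an endpoint at distance $\le r$, vertex labels only at distance $\le r$. A local rule of radius $r$ maps radius-$r$ disks to graphs with renaming covariance, disjointness preservation, bounded output size and pairwise consistency of outputs on a common graph; a CGD is $F(G)=\bigcup_{v\in V(G)} f(G^r_v)$;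 monotonic means w.r.t. $\subseteq$ (disks compared with same center). Category $\mathbf{G}_{\Sigma,\Delta,\pi}$: objects graphs, morphisms $m:G\to H$ given by renamings $|m|$ with $|m|(G)\subseteq H$, composition by composition of renamings. $\mathrm{U}$ is the identity on objects and sends an inclusion $G\subseteq H$ to the morphism with identity renaming. $\varnothing_R:\varnothing\to\varnothing$ is the endomorphism of the empty graph with renaming $R$. *)

From Stdlib Require Import List Arith Classical ClassicalEpsilon
  FunctionalExtensionality PropExtensionality.
Set Implicit Arguments.

Section Graphs.
(* V = the universe of vertex names (\mathcal V), Sig = Sigma (vertex labels),
   Del = Delta (edge labels), P = pi (ports). *)
Variables (V Sig Del P : Type).

Definition port := (V * P)%type.
Definition eset := port -> Prop.   (* a (two-element) set of ports = an edge *)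

Record graph := Graph {
  gV : V -> Prop;
  gE : eset -> Prop;
  gS : V -> option Sig;
  gD : eset -> option Del }.

Definition countable_set (A : V -> Prop) : Prop :=
  exists g : V -> nat, forall x y, A x -> A y -> g x = g y -> x = y.

(* Well-formed graphs: the elements of \mathcal G_{Sigma,Delta,pi}. *)
Definition wf (G : graph) : Prop :=
  countable_set (gV G) /\
  (forall e, gE G e -> exists a b : port, a <> b /\
       (forall p, e p <-> p = a \/ p = b) /\ gV G (fst a) /\ gV G (fst b)) /\
  (forall e e', gE G e -> gE G e' -> (exists p, e p /\ e' p) -> e = e') /\
  (forall v, gS G v <> None -> gV G v) /\
  (forall e, gD G e <> None -> gE G e).

Definition subgraph (G H : graph) : Prop :=
  (forall v, gV G v -> gV H v) /\
  (forall e, gE G e -> gE H e) /\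
  (forall v a, gS G v = Some a -> gS H v = Some a) /\
  (forall e a, gD G e = Some a -> gD H e = Some a).

Definition empty_graph : graph :=
  Graph (fun _ => False) (fun _ => False) (fun _ => None) (fun _ => None).

Record renaming := Renaming {
  rn : V -> V;
  rninv : V -> V;
  rn_K : forall x, rninv (rn x) = x;
  rn_KV : forall x, rn (rninv x) = x }.

Definition rid : renaming.
Proof. refine (@Renaming (fun x => x) (fun x => x) _ _); reflexivity. Defined.

Definition rcomp (R S : renaming) : renaming.
Proof.
  refine (@Renaming (fun x => rn R (rn S x)) (fun x => rninv S (rninv R x)) _ _).
  - intro x; rewrite rn_K; apply rn_K.
  - intro x; rewrite rn_KV; apply rn_KV.
Defined.

Definition rename (R : renaming) (G : graph) : graph :=
  Graph (fun x => gV G (rninv R x))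
        (fun e => gE G (fun p => e (rn R (fst p), snd p)))
        (fun x => gS G (rninv R x))
        (fun e => gD G (fun p => e (rn R (fst p), snd p))).

Definition adjacent (G : graph) (u v : V) : Prop :=
  exists e i j, gE G e /\ e (u, i) /\ e (v, j) /\ (u, i) <> (v, j).

Fixpoint dist_le (G : graph) (n : nat) (c v : V) : Prop :=
  match n with
  | 0 => gV G c /\ v = c
  | S m => dist_le G m c v \/ exists w, dist_le G m c w /\ adjacent G w v
  end.

Definition pdec (A : Prop) : bool :=
  if excluded_middle_informative A then true else false.

Definition disk_E (G : graph) (r : nat) (c : V) (e : eset) : Prop :=
  gE G e /\ exists p, e p /\ dist_le G r c (fst p).

Definition disk (G : graph) (r : nat) (c : V) : graph :=
  Graph (fun v => dist_le G (S r) c v)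
        (disk_E G r c)
        (fun v => if pdec (dist_le G r c v) then gS G v else None)
        (fun e => if pdec (disk_E G r c e) then gD G e else None).

Definition is_disk (r : nat) (D : graph) (c : V) : Prop :=
  exists G, wf G /\ gV G c /\ D = disk G r c.

(* Two graphs are consistent: their union is a graph. *)
Definition consistent (G1 G2 : graph) : Prop :=
  (forall v a b, gS G1 v = Some a -> gS G2 v = Some b -> a = b) /\
  (forall e a b, gD G1 e = Some a -> gD G2 e = Some b -> a = b) /\
  (forall e1 e2, gE G1 e1 -> gE G2 e2 -> (exists p, e1 p /\ e2 p) -> e1 = e2).

(* Local rules of radius r (a disk is pointed: f D c is f applied to the disk D of center c) *)
Definition local_rule (r : nat) (f : graph -> V -> graph) : Prop :=
  (forall D c, is_disk r D c -> wf (f D c)) /\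
  (forall D c (R : renaming), is_disk r D c -> f (rename R D) (rn R c) = rename R (f D c)) /\
  (forall D c D' c', is_disk r D c -> is_disk r D' c' ->
     (forall v, ~ (gV D v /\ gV D' v)) ->
     forall v, ~ (gV (f D c) v /\ gV (f D' c') v)) /\
  (exists b : nat, forall D c, is_disk r D c ->
     exists l : list V, length l <= b /\ forall v, gV (f D c) v -> In v l) /\
  (forall G u v, wf G -> gV G u -> gV G v ->
     consistent (f (disk G r u) u) (f (disk G r v) v)).

Definition cgd_of (r : nat) (f : graph -> V -> graph) (F : graph -> graph) : Prop :=
  forall G, wf G ->
    (forall x, gV (F G) x <-> exists v, gV G v /\ gV (f (disk G r v) v) x) /\
    (forall e, gE (F G) e <-> exists v, gV G v /\ gE (f (disk G r v) v) e) /\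
    (forall x a, gS (F G) x = Some a <-> exists v, gV G v /\ gS (f (disk G r v) v) x = Some a) /\
    (forall e a, gD (F G) e = Some a <-> exists v, gV G v /\ gD (f (disk G r v) v) e = Some a).

Definition monotonic_rule (r : nat) (f : graph -> V -> graph) : Prop :=
  forall D D' c, is_disk r D c -> is_disk r D' c -> subgraph D D' ->
    subgraph (f D c) (f D' c).

Definition graph_map (F : graph -> graph) : Prop := forall G, wf G -> wf (F G).

Definition monotonic (F : graph -> graph) : Prop :=
  forall G H, wf G -> wf H -> subgraph G H -> subgraph (F G) (F H).

Definition admits_monotonic_local_rule (F : graph -> graph) : Prop :=
  exists r f, local_rule r f /\ monotonic_rule r f /\ cgd_of r f F.

(* Category G_{Sigma,Delta,pi}: a morphism G -> H is a renaming R with R(G) \subseteq H. *)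
Definition is_hom (G H : graph) (R : renaming) : Prop := subgraph (rename R G) H.

Definition is_functor (Fo : graph -> graph) (Fm : graph -> graph -> renaming -> renaming) : Prop :=
  (forall G, wf G -> wf (Fo G)) /\
  (forall G H R, wf G -> wf H -> is_hom G H R -> is_hom (Fo G) (Fo H) (Fm G H R)) /\
  (forall G, wf G -> forall x, rn (Fm G G rid) x = x) /\
  (forall G H K R S, wf G -> wf H -> wf K -> is_hom G H R -> is_hom H K S ->
     forall x, rn (Fm G K (rcomp S R)) x = rn (Fm H K S) (rn (Fm G H R) x)).

(* U o F = F~ o U, where U is the identity on objects and sends G \subseteq H to id. *)
Definition lifts (F : graph -> graph) (Fo : graph -> graph)
    (Fm : graph -> graph -> renaming -> renaming) : Prop :=
  (forall G, wf G -> Fo G = F G) /\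
  (forall G H, wf G -> wf H -> subgraph G H -> forall x, rn (Fm G H rid) x = x).

Definition Fbar (Fm : graph -> graph -> renaming -> renaming) (R : renaming) : renaming :=
  Fm empty_graph empty_graph R.

(* group homomorphism Sym_V -> Sym_V (equality of renamings = equality as functions) *)
Definition group_hom (phi : renaming -> renaming) : Prop :=
  forall R S x, rn (phi (rcomp R S)) x = rn (rcomp (phi R) (phi S)) x.

End Graphs.

Definition uncountable (T : Type) : Prop :=
  ~ exists g : T -> nat, forall x y, g x = g y -> x = y.

Definition finite_type (T : Type) : Prop := exists l : list T, forall x, In x l.


(* Every renaming R is an endomorphism [varnothing_R] of the empty graph, so the
   composition law of the functor on that single object already says that
   [R |-> |F~(varnothing_R)|] preserves composition. *)

Section EmptyGraph.
Variables (V Sig Del P : Type).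

Lemma wf_empty_graph : wf (empty_graph V Sig Del P).
Proof.
  repeat split; simpl.
  - exists (fun _ => 0); intros x y [].
  - intros e [].
  - intros e e' [].
  - intros v Hv; exfalso; apply Hv; reflexivity.
  - intros e He; exfalso; apply He; reflexivity.
Qed.

Lemma is_hom_empty_graph (R : renaming V) :
  is_hom (empty_graph V Sig Del P) (empty_graph V Sig Del P) R.
Proof.
  repeat split; simpl.
  - intros v [].
  - intros e [].
  - intros v a Ha; discriminate.
  - intros e a Ha; discriminate.
Qed.

End EmptyGraph.

Lemma functor_endo_comp (V Sig Del P : Type)
  (Fo : graph V Sig Del P -> graph V Sig Del P)
  (Fm : graph V Sig Del P -> graph V Sig Del P -> renaming V -> renaming V)
  (G : graph V Sig Del P) (R S : renaming V) :
  is_functor Fo Fm -> wf G -> is_hom G G R -> is_hom G G S ->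
  forall x, rn (Fm G G (rcomp R S)) x = rn (Fm G G R) (rn (Fm G G S) x).
Proof.
  intros (_ & _ & _ & Hcomp) HG HR HS x.
  exact (Hcomp G G G S R HG HG HG HS HR x).
Qed.

Theorem proposition4p10 (V Sig Del P : Type)
  (HV : uncountable V) (HP : finite_type P)
  (F : graph V Sig Del P -> graph V Sig Del P)
  (HFmap : graph_map F)
  (HFmono : monotonic F)
  (HFloc : admits_monotonic_local_rule F)
  (Fo : graph V Sig Del P -> graph V Sig Del P)
  (Fm : graph V Sig Del P -> graph V Sig Del P -> renaming V -> renaming V)
  (Hfun : is_functor Fo Fm)
  (Hlift : lifts F Fo Fm) :
  group_hom (Fbar Fm).
Proof.
  intros R S x; unfold Fbar; simpl.
  eapply functor_endo_comp.
  - exact Hfun.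
  - apply wf_empty_graph.
  - apply is_hom_empty_graph.
  - apply is_hom_empty_graph.
Qed.
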